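(* For every square-free integer $m>1$ with $m\ne 6$, $$ \gcd(m,\varphi(m))\le m\exp\left(-\sqrt{\log 2\,\log m}\right). $$
   Context: $\varphi$ denotes Euler's totient function. *)

From mathcomp Require Import all_boot.
From Stdlib Require Import Reals.

Definition squarefree (m : nat) : Prop :=
  forall p : nat, prime p -> ~ (p * p %| m).

(* Write m = d g with g = gcd(m, phi(m)); it suffices that ln 2 ln m <= (ln d)^2.
   More generally, if D n is squarefree and n | phi(D n), then
   ln 2 ln (D n) <= (ln D)^2 unless (D, n) = (3, 2), by strong induction on n.
   The largest prime factor of a squarefree n > 1 cannot divide phi(n), so
   gcd(n, phi(D)) > 1. Split this gcd as t o with t <= 2 and o odd, and let n'
   be the cofactor in n; then n' | phi(o n'), so the induction hypothesis
   applies to (o, n'), while phi(D) is even, so 2 o <= phi(D) <= D gives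
   ln D >= ln 2 + ln o, which is exactly what the step needs. *)

From mathcomp Require Import all_boot zify.
From Stdlib Require Import Reals Psatz.

Set Implicit Arguments.
Unset Strict Implicit.
Unset Printing Implicit Defensive.

Lemma squarefree_dvd a b : a %| b -> squarefree b -> squarefree a.
Proof. by move=> ab sqf_b p p_pr pp_a; apply: (sqf_b p p_pr); apply: dvdn_trans ab. Qed.

Lemma squarefree_gt0 n : squarefree n -> 0 < n.
Proof. by case: n => // /(_ 2 isT); rewrite dvdn0. Qed.

Lemma squarefree_coprime a b : squarefree (a * b) -> coprime a b.
Proof.
move=> sqf_ab; have := squarefree_gt0 sqf_ab; rewrite muln_gt0 => /andP[a_gt0 _].
rewrite /coprime eqn_leq gcdn_gt0 a_gt0 andbT leqNgt; apply/negP => g_gt1.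
apply: (sqf_ab _ (pdiv_prime g_gt1)); apply: dvdn_mul.
  exact: dvdn_trans (pdiv_dvd _) (dvdn_gcdl _ _).
exact: dvdn_trans (pdiv_dvd _) (dvdn_gcdr _ _).
Qed.

Lemma squarefree_odd_split k :
  squarefree k -> exists t o, [/\ k = t * o, 0 < t <= 2 & odd o].
Proof.
move=> sqf_k; have [odd_k | even_k] := boolP (odd k).
  by exists 1, k; rewrite mul1n.
have two_k : 2 %| k by rewrite dvdn2.
exists 2, (k %/ 2); split=> //; first by rewrite mulnC divnK.
apply: contraT => even_k2; case: (sqf_k 2 isT).
by rewrite -(divnK two_k) dvdn_mul // dvdn2.
Qed.

Lemma squarefree_coprime_divn_gcd n k :
  squarefree n -> coprime (n %/ gcdn n k) k.
Proof.
move=> sqf_n; set g := gcdn n k.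
have n_eq : n = g * (n %/ g) by rewrite mulnC divnK // dvdn_gcdl.
have cop : coprime g (n %/ g) by apply: squarefree_coprime; rewrite -n_eq.
rewrite /coprime -dvdn1 -(eqP cop) dvdn_gcd dvdn_gcdl andbT.
rewrite dvdn_gcd dvdn_gcdr andbT; apply: dvdn_trans (dvdn_gcdl _ _) _.
by rewrite [X in _ %| X]n_eq dvdn_mull.
Qed.

Lemma totient_leq n : totient n <= n.
Proof.
rewrite totient_count_coprime; apply: (@leq_trans (\sum_(0 <= d < n) 1)).
  by apply: leq_sum => d _; apply: leq_b1.
by rewrite sum_nat_const_nat muln1 subn0.
Qed.

Lemma pred_prime_dvd_totient n q : 0 < n -> prime q -> q %| n -> q.-1 %| totient n.
Proof.
move=> n_gt0 q_pr q_n; rewrite totientE // (big_rem q) /=; last first.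
  by rewrite mem_primes q_pr n_gt0.
by rewrite -mulnA dvdn_mulr.
Qed.

Lemma squarefree_totient_even n : squarefree n -> 2 < n -> 2 %| totient n.
Proof.
move=> sqf_n n_gt2; have [t [o [n_eq /andP[t_gt0 t_le2] odd_o]]] := squarefree_odd_split sqf_n.
have o_gt1 : 1 < o by move: n_gt2; rewrite n_eq; nia.
set q := pdiv o; have q_pr : prime q := pdiv_prime o_gt1.
have odd_q : odd q := dvdn_odd (pdiv_dvd o) odd_o.
apply: dvdn_trans (pred_prime_dvd_totient (squarefree_gt0 sqf_n) q_pr _).
  by move: odd_q; rewrite dvdn2 -(prednK (prime_gt0 q_pr)) /=.
by rewrite n_eq dvdn_mull // pdiv_dvd.
Qed.

Lemma logn_squarefree n p : squarefree n -> prime p -> p %| n -> logn p n = 1.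
Proof.
move=> sqf_n p_pr p_n; have n_gt0 := squarefree_gt0 sqf_n.
apply/eqP; rewrite eqn_leq leqNgt -!pfactor_dvdn // expn1 p_n andbT.
by apply/negP; rewrite -mulnn; apply: sqf_n.
Qed.

Lemma prime_dvd_totient_squarefree n p :
  squarefree n -> prime p -> p %| totient n -> exists2 q, q \in primes n & p %| q.-1.
Proof.
move=> sqf_n p_pr; rewrite totientE ?squarefree_gt0 // Euclid_dvd_prod // big_has.
case/hasP=> q q_n; move: (q_n); rewrite mem_primes => /and3P[q_pr _ q_dvd].
by rewrite logn_squarefree // expn0 muln1 => p_q; exists q.
Qed.

Lemma max_pdiv_ndvd_totient n : squarefree n -> 1 < n -> ~~ (max_pdiv n %| totient n).
Proof.
move=> sqf_n n_gt1; apply/negP => /(prime_dvd_totient_squarefree sqf_n (max_pdiv_prime n_gt1)).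
case=> q q_n P_q; have := max_pdiv_max q_n.
have q_gt1 : 1 < q by move: q_n; rewrite mem_primes => /andP[/prime_gt1].
have := dvdn_leq _ P_q; lia.
Qed.

Lemma gcdn_totient_gt1 D n :
  squarefree (D * n) -> n %| totient (D * n) -> 1 < n -> 1 < gcdn n (totient D).
Proof.
move=> sqf_Dn n_tot n_gt1.
have sqf_n : squarefree n := squarefree_dvd (dvdn_mull D (dvdnn n)) sqf_Dn.
have P_pr := max_pdiv_prime n_gt1; have P_n := max_pdiv_dvd n.
have := dvdn_trans P_n n_tot.
rewrite totient_coprime ?squarefree_coprime // Euclid_dvdM //.
rewrite (negbTE (max_pdiv_ndvd_totient sqf_n n_gt1)) orbF => P_totD.
apply: leq_trans (prime_gt1 P_pr) (dvdn_leq _ _); first by rewrite gcdn_gt0 totient_gt0 ltnW.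
by rewrite dvdn_gcd P_n P_totD.
Qed.

Lemma squarefree_dvd_totient_eq1 n : squarefree n -> n %| totient n -> n = 1.
Proof.
move=> sqf_n n_tot; apply/eqP; rewrite eqn_leq squarefree_gt0 // andbT leqNgt.
apply/negP => n_gt1.
by have := @gcdn_totient_gt1 1 n; rewrite !mul1n gcdn1 => /(_ sqf_n n_tot n_gt1).
Qed.

(* Here t o = gcdn n (totient D), split into its 2-part t and its odd part o. *)
Lemma squarefree_totient_descent D n :
  squarefree (D * n) -> n %| totient (D * n) -> 1 < n ->
  exists t o n', [/\ n = t * (o * n'), 0 < t <= 2, 1 < t * o,
                     2 * o %| totient D & n' %| totient (o * n')].
Proof.
move=> sqf_Dn n_tot n_gt1.
have sqf_n : squarefree n := squarefree_dvd (dvdn_mull D (dvdnn n)) sqf_Dn.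
have sqf_D : squarefree D := squarefree_dvd (dvdn_mulr n (dvdnn D)) sqf_Dn.
set g := gcdn n (totient D); set n' := n %/ g.
have g_gt1 : 1 < g := gcdn_totient_gt1 sqf_Dn n_tot n_gt1.
have g_totD : g %| totient D := dvdn_gcdr _ _.
have sqf_g : squarefree g := squarefree_dvd (dvdn_gcdl _ _) sqf_n.
have [t [o [g_eq t_le2 odd_o]]] := squarefree_odd_split sqf_g.
have n_eq : n = t * (o * n') by rewrite mulnA -g_eq mulnC divnK // dvdn_gcdl.
exists t, o, n'; split; rewrite -?g_eq //.
- have D_gt2 : 2 < D.
    by rewrite -totient_gt1 (leq_trans g_gt1) // dvdn_leq // totient_gt0 squarefree_gt0.
  rewrite Gauss_dvd ?coprime2n // squarefree_totient_even //=.
  by apply: dvdn_trans g_totD; rewrite g_eq dvdn_mull.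
- have tot_t : totient t = 1.
    by case/andP: t_le2; case: t {g_eq n_eq} => [|[|[|]]].
  have cop : coprime n' (totient D) := squarefree_coprime_divn_gcd (totient D) sqf_n.
  have n'_n : n' %| n by rewrite n_eq !dvdn_mull.
  have := dvdn_trans n'_n n_tot.
  rewrite totient_coprime ?squarefree_coprime // Gauss_dvdr //.
  by rewrite [in totient n]n_eq totient_coprime ?tot_t ?mul1n // squarefree_coprime -?n_eq.
Qed.

Lemma ln_INR_le m n : 0 < m -> m <= n -> (ln (INR m) <= ln (INR n))%R.
Proof.
move=> m_gt0; rewrite leq_eqVlt => /orP[/eqP-> | m_lt_n]; first exact: Rle_refl.
by apply/Rlt_le/ln_increasing; [apply: lt_0_INR; apply/ltP | apply: lt_INR; apply/ltP].
Qed.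

Lemma ln_INR_ge0 n : 0 < n -> (0 <= ln (INR n))%R.
Proof. by move=> n_gt0; have := ln_INR_le (isT : 0 < 1) n_gt0; rewrite /= ln_1. Qed.

Lemma ln_INR_mul m n : 0 < m * n -> ln (INR (m * n)) = (ln (INR m) + ln (INR n))%R.
Proof.
rewrite muln_gt0 => /andP[m_gt0 n_gt0].
by rewrite mult_INR ln_mult //; apply: lt_0_INR; apply/ltP.
Qed.

Lemma ln_INR_2 : ln (INR 2) = ln 2.
Proof. by rewrite INR_IZR_INZ. Qed.

Lemma ln2_ln_le_sqr_ln D : 0 < D -> (ln 2 * ln (INR D) <= ln (INR D) ^ 2)%R.
Proof.
move=> D_gt0; have lnD_ge0 := ln_INR_ge0 D_gt0.
have [D_le1 | D_gt1] := leqP D 1.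
  have -> : D = 1 by lia.
  by rewrite /= ln_1; lra.
have := ln_INR_le (isT : 0 < 2) D_gt1; rewrite ln_INR_2.
have := ln_INR_ge0 (isT : 0 < 2); rewrite ln_INR_2; nra.
Qed.

(* The inductive step for a = ln 2, y = ln D, u = ln t, z = ln o, w = ln n':
   y >= 2 a and y >= a + z together give y (y - a) >= a ^ 2 + z ^ 2. *)
Lemma sqr_bound_step (a y u z w : R) :
  (0 <= a -> 0 <= u -> u <= a -> 0 <= z -> a + a <= y -> a + z <= y ->
   a * (z + w) <= z ^ 2 -> a * (y + (u + (z + w))) <= y ^ 2)%R.
Proof. by move=> *; nra. Qed.

(* The step when (o, n') = (3, 2), where 3 ln 2 <= 2 ln 3 replaces the induction
   hypothesis. *)
Lemma sqr_bound_step_exceptional (a y u b : R) :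
  (0 <= a -> 0 <= u -> u <= a -> 3 * a <= 2 * b -> a + b <= y ->
   a * (y + (u + (b + a))) <= y ^ 2)%R.
Proof. by move=> *; nra. Qed.

Lemma ln2_ln_mul_le_sqr_ln D n :
  squarefree (D * n) -> n %| totient (D * n) -> (D, n) != (3, 2) ->
  (ln 2 * ln (INR (D * n)) <= ln (INR D) ^ 2)%R.
Proof.
elim/ltn_ind: n D => n IH D sqf_Dn n_tot Dn_ne32.
have sqf_n : squarefree n := squarefree_dvd (dvdn_mull D (dvdnn n)) sqf_Dn.
have sqf_D : squarefree D := squarefree_dvd (dvdn_mulr n (dvdnn D)) sqf_Dn.
have n_gt0 := squarefree_gt0 sqf_n; have D_gt0 := squarefree_gt0 sqf_D.
have ln2_ge0 : (0 <= ln 2)%R by rewrite -ln_INR_2; apply: ln_INR_ge0.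
have lnD_ge0 := ln_INR_ge0 D_gt0.
have [n_le1 | n_gt1] := leqP n 1.
  have -> : n = 1 by lia.
  by rewrite muln1; apply: ln2_ln_le_sqr_ln.
have [t [o [n' [n_eq /andP[t_gt0 t_le2] to_gt1 two_o_totD n'_tot]]]] :=
  squarefree_totient_descent sqf_Dn n_tot n_gt1.
have /and3P[_ o_gt0 n'_gt0] : [&& 0 < t, 0 < o & 0 < n'] by rewrite -!muln_gt0 -n_eq.
have n'_lt_n : n' < n by rewrite n_eq mulnA ltn_Pmull.
have sqf_on' : squarefree (o * n') by apply: squarefree_dvd sqf_n; rewrite n_eq dvdn_mull.
have two_o_le_totD : 2 * o <= totient D by rewrite dvdn_leq ?totient_gt0.
have two_o_le_D : 2 * o <= D := leq_trans two_o_le_totD (totient_leq D).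
have D_gt3 : 3 < D.
  have D_gt2 : 2 < D by rewrite -totient_gt1 (leq_trans _ two_o_le_totD) // leq_pmulr.
  rewrite ltn_neqAle D_gt2 andbT; apply: contra Dn_ne32 => /eqP D3.
  have o1 : o = 1 by move: two_o_le_totD; rewrite -D3 totient_prime //; lia.
  have n'1 : n' = 1.
    by move: sqf_on' n'_tot; rewrite o1 !mul1n; apply: squarefree_dvd_totient_eq1.
  by move: n_gt1; rewrite D3 n_eq o1 n'1 !muln1 => t_gt1; rewrite (_ : t = 2) //; lia.
have lnD_ge_2ln2 : (ln 2 + ln 2 <= ln (INR D))%R.
  by rewrite -ln_INR_2 -ln_INR_mul //; apply: ln_INR_le.
have lnD_ge_ln2o : (ln 2 + ln (INR o) <= ln (INR D))%R.
  rewrite -ln_INR_2 -ln_INR_mul ?muln_gt0 ?o_gt0 //.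
  by apply: ln_INR_le; rewrite ?muln_gt0 ?o_gt0.
have lnt_le_ln2 : (ln (INR t) <= ln 2)%R by rewrite -ln_INR_2; apply: ln_INR_le.
have lnt_ge0 := ln_INR_ge0 t_gt0; have lno_ge0 := ln_INR_ge0 o_gt0.
rewrite n_eq !ln_INR_mul ?muln_gt0 ?D_gt0 ?t_gt0 ?o_gt0 ?n'_gt0 //.
have [[o3 n'2] | on'_ne32] := eqVneq (o, n') (3, 2).
  rewrite o3 in lnD_ge_ln2o; rewrite o3 n'2 ln_INR_2.
  apply: sqr_bound_step_exceptional => //.
  have := ln_INR_le (isT : 0 < 2 * (2 * 2)) (isT : 2 * (2 * 2) <= 3 * 3).
  by rewrite !ln_INR_mul // ln_INR_2; lra.
have := IH n' n'_lt_n o sqf_on' n'_tot on'_ne32; rewrite ln_INR_mul ?muln_gt0 ?o_gt0 //.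
by apply: sqr_bound_step.
Qed.

Lemma one_le_mul_exp_neg_sqrt (y s : R) :
  (0 < y -> 0 <= ln y -> s <= ln y ^ 2 -> 1 <= y * exp (- sqrt s))%R.
Proof.
move=> y_gt0 lny_ge0 s_le.
have sqrt_le : (sqrt s <= ln y)%R by rewrite -(sqrt_pow2 (ln y)) //; apply: sqrt_le_1_alt.
rewrite -[X in (_ <= X * _)%R](exp_ln y) // -exp_plus.
have := exp_ineq1_le (ln y + - sqrt s); lra.
Qed.

Theorem lemma2p1 (m : nat) :
  squarefree m -> 1 < m -> m <> 6 ->
  (INR (gcdn m (totient m)) <=
     INR m * exp (- sqrt (ln 2 * ln (INR m))))%R.
Proof.
move=> sqf_m m_gt1 m_ne6; set g := gcdn m (totient m); set d := m %/ g.
have m_eq : m = d * g by rewrite divnK // dvdn_gcdl.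
have /andP[d_gt0 g_gt0] : (0 < d) && (0 < g) by rewrite -muln_gt0 -m_eq ltnW.
have key : (ln 2 * ln (INR m) <= ln (INR d) ^ 2)%R.
  rewrite [in INR m]m_eq; apply: ln2_ln_mul_le_sqr_ln; rewrite -?m_eq ?dvdn_gcdr //.
  by apply/eqP => -[d3 g2]; apply: m_ne6; rewrite m_eq d3 g2.
have d_gt0R : (0 < INR d)%R by apply: lt_0_INR; apply/ltP.
have g_gt0R : (0 < INR g)%R by apply: lt_0_INR; apply/ltP.
have := one_le_mul_exp_neg_sqrt d_gt0R (ln_INR_ge0 d_gt0) key.
rewrite [in INR m]m_eq mult_INR; nra.
Qed.
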